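(* For every integer $n \geq 3$, the line graph $L(K_n)$ of the complete graph $K_n$ satisfies $c_V(L(K_n)) = 2(n-2)$, $c_E(L(K_n)) \geq n(n-2)/3$, and $c_{E,\mathrm{r}}(L(K_n)) \geq n^2/12$.
   Context: The line graph $L(G)$ has the edges of $G$ as vertices, two being adjacent iff they share an endpoint. Games: players alternate turns, cops first; initially the cop player places all cops, then the robber is placed on a vertex (several pieces may share a position). In a turn each piece of the moving player may stay or make one move (no obligation to move). The robber sits on vertices and moves to adjacent vertices; $v_r$ is his current vertex. Vertex version: cops on vertices moving to adjacent vertices; cops win when every neighbor of $v_r$ is occupied by a cop; $c_V(G)$ is the least number of cops forcing a win in finitely many turns. Edge version: cops sit on edges; a cop on edge $e$ may move to any edge sharing an endpoint with $e$; cops win when every edge incident to $v_r$ is occupied; number $c_E(G)$. Restrictive edge version: as the edge version, but the robber may not move along an edge currently occupied by a cop; number $c_{E,\mathrm{r}}(G)$. *)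

From mathcomp Require Import all_boot.
Set Implicit Arguments. Unset Strict Implicit. Unset Printing Implicit Defensive.

(* A simple graph is given by a finite vertex type V and a symmetric,
   irreflexive adjacency relation adj : rel V. *)

Definition is_edge (V : finType) (adj : rel V) (A : {set V}) : bool :=
  [exists u, exists v, adj u v && (A == [set u; v])].

Definition edge_of (V : finType) (adj : rel V) := {A : {set V} | is_edge adj A}.

Definition line_adj (V : finType) (adj : rel V) : rel (edge_of adj) :=
  fun e f => (e != f) && [exists v, (v \in val e) && (v \in val f)].

Definition Kn_adj (n : nat) : rel 'I_n := fun u v => u != v.

Definition LKn (n : nat) : finType := edge_of (@Kn_adj n).
Definition LKn_adj (n : nat) : rel (LKn n) := @line_adj _ (@Kn_adj n).

(* Generic cops-and-robber game with k cops.
   P : positions of the cops; cm p q : a cop at p may go to q (incl. staying);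
   rm c r r' : the robber at r may go to r' (incl. staying) when cops are at c;
   caught c r : the cops at c win against the robber at r.
   cwin c r : cops at c, robber at r, cops to move (win already checked),
   and the cops can force a win in finitely many turns (least fixed point). *)
Inductive cwin (V P : finType) (k : nat) (cm : rel P)
    (rm : ('I_k -> P) -> rel V) (caught : ('I_k -> P) -> pred V)
  : ('I_k -> P) -> V -> Prop :=
| cwin_now c r : caught c r -> cwin cm rm caught c r
| cwin_step c r (c' : 'I_k -> P) :
    (forall i, cm (c i) (c' i)) ->
    (caught c' r \/ (forall r', rm c' r r' -> cwin cm rm caught c' r')) ->
    cwin cm rm caught c r.

Definition cops_win (V P : finType) (k : nat) (cm : rel P)
    (rm : ('I_k -> P) -> rel V) (caught : ('I_k -> P) -> pred V) : Prop :=
  exists c0 : 'I_k -> P, forall r : V, cwin cm rm caught c0 r.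

Definition vertex_win (V : finType) (adj : rel V) (k : nat) : Prop :=
  @cops_win V V k (fun p q => (p == q) || adj p q)
    (fun _ r r' => (r == r') || adj r r')
    (fun c r => [forall w, adj r w ==> [exists i, c i == w]]).

Definition edge_cm (V : finType) (adj : rel V) : rel (edge_of adj) :=
  fun e f => (e == f) || [exists v, (v \in val e) && (v \in val f)].

Definition edge_caught (V : finType) (adj : rel V) (k : nat)
  (c : 'I_k -> edge_of adj) (r : V) : bool :=
  [forall e : edge_of adj, (r \in val e) ==> [exists i, c i == e]].

Definition edge_win (V : finType) (adj : rel V) (k : nat) : Prop :=
  @cops_win V (edge_of adj) k (@edge_cm V adj)
    (fun _ r r' => (r == r') || adj r r')
    (@edge_caught V adj k).

Definition redge_win (V : finType) (adj : rel V) (k : nat) : Prop :=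
  @cops_win V (edge_of adj) k (@edge_cm V adj)
    (fun c r r' => (r == r') ||
        (adj r r' && ~~ [exists i, val (c i) == [set r; r']]))
    (@edge_caught V adj k).

From mathcomp Require Import all_boot zify.
Set Implicit Arguments. Unset Strict Implicit. Unset Printing Implicit Defensive.

(* Lower bounds: the robber survives by keeping an invariant.  In the vertex
   game, an edge {p, q} of K_n has 2(n-2) neighbours in L(K_n), which fewer
   cops cannot all occupy.  In the edge games, a cop on an edge {e, f} of
   L(K_n) covers the at most 3 vertices of K_n spanned by e and f, so the
   loads (numbers of covering cops) of the vertices of K_n sum to at most 3k.
   To catch the robber on {p, q} in one move the cops must occupy the n-2
   edges {{p,q}, {p,z}}, and each cop doing so covered p one move earlier.
   Hence the robber is safe while his edge has an endpoint of load below n-2.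
   In the edge game he can always step to an edge through a vertex of load
   at most n-3 when 3k < n(n-2).  In the restrictive game he stays if his
   edge has a light endpoint p; otherwise both endpoints are heavy, and
   counting heavy vertices and blocked edges {{p,q}, {p,z}} (at most the
   old load of p) shows that some unblocked {p,z} with z light exists when
   the threshold is (n-2)/2 and 12k < n^2.
   Upper bound: 2(n-2) cops on the edges joining two corner vertices to the
   n-2 other vertices can occupy all neighbours of any robber edge in a
   single move. *)

Section RobberInvariant.

Variables (V P : finType) (k : nat) (cm : rel P).
Variables (rm : ('I_k -> P) -> rel V) (caught : ('I_k -> P) -> pred V).
Variable Inv : ('I_k -> P) -> V -> Prop.
Hypothesis cm_refl : reflexive cm.
Hypothesis Inv_step : forall c r c', Inv c r -> (forall i, cm (c i) (c' i)) ->
  ~~ caught c' r /\ exists2 r', rm c' r r' & Inv c' r'.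

Lemma Inv_not_caught c r : Inv c r -> ~~ caught c r.
Proof. by move=> HI; case: (Inv_step HI (fun i => cm_refl (c i))). Qed.

Lemma cwin_not_Inv c r : cwin cm rm caught c r -> ~ Inv c r.
Proof.
move: c r; fix IH 3 => c r [{}c {}r Hc | {}c {}r c' Hm Hor] HI.
  by move/negP: (Inv_not_caught HI).
have [/negP Hnc [r' Hr' HI']] := Inv_step HI Hm.
case: Hor => [//|Hall]; exact: IH _ _ (Hall r' Hr') HI'.
Qed.

Lemma robber_wins : (forall c, exists r, Inv c r) -> ~ cops_win cm rm caught.
Proof. by move=> Hinit [c0 Hc0]; have [r HI] := Hinit c0; apply: cwin_not_Inv HI. Qed.

End RobberInvariant.

Lemma edgeP (V : finType) (adj : rel V) (e : edge_of adj) :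
  exists a b, adj a b /\ val e = [set a; b].
Proof. by case: e => A /= /existsP [a /existsP [b /andP [Hab /eqP ->]]]; exists a, b. Qed.

Lemma is_edge_set2 (V : finType) (adj : rel V) (a b : V) : adj a b -> is_edge adj [set a; b].
Proof. by move=> ab; apply/existsP; exists a; apply/existsP; exists b; rewrite ab eqxx. Qed.

Lemma line_adj_or_eq (V : finType) (adj : rel V) (e f : edge_of adj) (v : V) :
  v \in val e -> v \in val f -> (e == f) || line_adj e f.
Proof.
move=> ve vf; case: eqP => //= /eqP ef.
by rewrite /line_adj ef; apply/existsP; exists v; rewrite ve vf.
Qed.

Lemma edge_cm_refl (V : finType) (adj : rel V) : reflexive (@edge_cm V adj).
Proof. by move=> e; rewrite /edge_cm eqxx. Qed.

Lemma card_set_sum (T : finType) (P : pred T) : #|[set x | P x]| = \sum_x P x.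
Proof. by rewrite -sum1dep_card big_mkcond; apply: eq_bigr => x _; case: (P x). Qed.

Section LineGraphLoad.

Variables (V : finType) (adj : rel V) (k : nat).
Local Notation E := (edge_of adj).
Local Notation L := (edge_of (@line_adj _ adj)).

Definition ledge_verts (C : L) : {set V} := \bigcup_(e in val C) val e.

Definition load (c : 'I_k -> L) (x : V) : nat := #|[set i | x \in ledge_verts (c i)]|.

Lemma ledgeP (C : L) : exists e f, [/\ e != f, val C = [set e; f] &
  exists2 v, v \in val e & v \in val f].
Proof.
case: C => A /= /existsP [e /existsP [f /andP [/andP [ef /existsP [v /andP [ve vf]]] /eqP ->]]].
by exists e, f; split=> //; exists v.
Qed.

Lemma card_edge_le2 (e : E) : #|val e| <= 2.
Proof. by have [a [b [_ ->]]] := edgeP e; rewrite cards2; case: (a != b). Qed.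

Lemma card_ledge_verts (C : L) : #|ledge_verts C| <= 3.
Proof.
have [e [f [ef EC [v ve vf]]]] := ledgeP C.
rewrite /ledge_verts EC big_setU1 ?inE //= big_set1 cardsU.
have meet : 0 < #|val e :&: val f| by apply/card_gt0P; exists v; rewrite inE ve vf.
move: meet (card_edge_le2 e) (card_edge_le2 f) => /=; lia.
Qed.

Lemma sum_load (c : 'I_k -> L) : \sum_x load c x <= 3 * k.
Proof.
have -> : \sum_x load c x = \sum_i #|ledge_verts (c i)|.
  rewrite /load; under eq_bigr do rewrite card_set_sum.
  rewrite exchange_big; apply: eq_bigr => i _.
  by rewrite -card_set_sum; apply: eq_card => x; rewrite inE.
apply: (@leq_trans (\sum_(i < k) 3)); first by apply: leq_sum => i _; apply: card_ledge_verts.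
by rewrite sum_nat_const card_ord mulnC.
Qed.

Lemma card_high_load (c : 'I_k -> L) th :
  #|[set x | th < load c x]| * th.+1 <= 3 * k.
Proof.
apply: leq_trans (sum_load c).
rewrite -sum1dep_card big_distrl /= [X in _ <= X](bigID (fun x => th < load c x)) /=.
by apply: leq_trans (leq_addr _ _); apply: leq_sum => x; rewrite mul1n.
Qed.

Lemma exists_low_load (c : 'I_k -> L) th :
  3 * k < #|V| * th.+1 -> exists x, load c x <= th.
Proof.
move=> Hk; case: (boolP [exists x, load c x <= th]) => [/existsP // | /existsPn Hhigh].
exfalso; move: (card_high_load c th); apply/negP; rewrite -ltnNge; apply: leq_trans Hk _.
rewrite leq_mul2r; apply/orP; right.
by apply/subset_leq_card/subsetP => x _; rewrite inE ltnNge Hhigh.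
Qed.

Lemma load_threat (c c' : 'I_k -> L) (r : E) (p : V) (Z : {set V}) :
  (forall i, edge_cm (c i) (c' i)) -> p \in val r ->
  (forall z, z \in Z -> z \notin val r /\
     exists i, exists2 e, val (c' i) = [set r; e] & val e = [set p; z]) ->
  #|Z| <= load c p.
Proof.
move=> step pr HZ.
pose g i := odflt p [pick y in ledge_verts (c' i) :\: val r].
suff sub : Z \subset g @: [set i | p \in ledge_verts (c i)].
  exact: leq_trans (subset_leq_card sub) (leq_imset_card _ _).
apply/subsetP => z Zz; have [zr [i [e Ei Ee]]] := HZ z Zz.
have re : r != e by apply: contraNneq zr => ->; rewrite Ee !inE eqxx orbT.
have p_ends f : f \in val (c' i) -> p \in val f.
  by rewrite Ei !inE => /orP [] /eqP ->; rewrite ?Ee ?inE ?eqxx.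
apply/imsetP; exists i.
- rewrite inE; apply/bigcupP; case/orP: (step i) => [/eqP -> | /existsP [f /andP [fc fc']]].
    by exists r; rewrite ?Ei ?inE ?eqxx.
  by exists f; rewrite // p_ends.
- rewrite /g; have -> : ledge_verts (c' i) :\: val r = [set z].
    apply/setP => y; rewrite /ledge_verts Ei big_setU1 ?inE //= big_set1 Ee !inE.
    case: (eqVneq y z) => [-> | _]; first by rewrite !orbT andbT; exact: zr.
    rewrite orbF; case: (eqVneq y p) => [-> | _]; first by rewrite pr.
    by rewrite orbF andNb.
  by case: pickP => [y | /(_ z)]; rewrite !inE ?eqxx // => /eqP.
Qed.

End LineGraphLoad.

Lemma set2_inside_outside (T : finType) (A : {set T}) (x x' z z' : T) :
  x \in A -> x' \in A -> z \notin A -> z' \notin A ->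
  [set x; z] = [set x'; z'] -> x = x' /\ z = z'.
Proof.
move=> xA x'A zA z'A E.
have : x \in [set x'; z'] by rewrite -E !inE eqxx.
have : z \in [set x'; z'] by rewrite -E !inE eqxx orbT.
rewrite !inE => /orP [/eqP zx' | /eqP ->]; first by move: zA; rewrite zx' x'A.
case/orP => [/eqP -> // | /eqP xz']; by move: z'A; rewrite -xz' xA.
Qed.

Section CompleteLineGraph.

Variable n : nat.
Local Notation E := (LKn n).
Local Notation L := (edge_of (@LKn_adj n)).

(* The default [d] is returned only when [a = b]. *)
Definition kedge (d : E) (a b : 'I_n) : E := insubd d [set a; b].

Lemma val_kedge d a b : a != b -> val (kedge d a b) = [set a; b].
Proof. by move=> ab; rewrite /kedge val_insubd (@is_edge_set2 _ (@Kn_adj n)). Qed.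

Lemma card_Kn_edge (e : E) : #|val e| = 2.
Proof. by have [a [b [ab ->]]] := edgeP e; rewrite cards2 -[a != b]/(Kn_adj a b) ab. Qed.

Lemma card_Kn_edgeC (e : E) : #|~: val e| = n - 2.
Proof. by rewrite cardsCs setCK card_ord card_Kn_edge. Qed.

Lemma Kn_edge_other (e : E) (p : 'I_n) : p \in val e ->
  exists2 q, q != p & val e = [set p; q].
Proof.
have [a [b [ab ->]]] := edgeP e; rewrite !inE => /orP [] /eqP ->.
  by exists b; rewrite 1?eq_sym.
by exists a => //; rewrite setUC.
Qed.

Lemma LKn_adj_kedge (r : E) (p z : 'I_n) : p \in val r -> z \notin val r ->
  LKn_adj r (kedge r p z).
Proof.
move=> pr zr; have pz : p != z by apply: contraNneq zr => <-.
apply/andP; split; last by apply/existsP; exists p; rewrite pr val_kedge // !inE eqxx.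
by apply: contraNneq zr => ->; rewrite val_kedge // !inE eqxx orbT.
Qed.

Lemma LKn_adjP (r w : E) : LKn_adj r w ->
  exists p y, [/\ p \in val r, y \notin val r & val w = [set p; y]].
Proof.
case/andP => rw /existsP [p /andP [pr pw]]; have [y yp Ew] := Kn_edge_other pw.
exists p, y; split=> //; apply: contra rw => yr.
have [q qp Er] := Kn_edge_other pr.
by move: yr; rewrite Er !inE (negbTE yp) /= => /eqP yq; rewrite -val_eqE Er Ew yq.
Qed.

Lemma LKn_step_to (r : E) (x : 'I_n) :
  exists2 r', (r == r') || LKn_adj r r' & x \in val r'.
Proof.
have [xr | xr] := boolP (x \in val r); first by exists r; rewrite ?eqxx.
have [a [b [_ Er]]] := edgeP r; have ar : a \in val r by rewrite Er !inE eqxx.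
exists (kedge r a x); first by rewrite LKn_adj_kedge ?orbT.
by rewrite val_kedge ?inE ?eqxx ?orbT //; apply: contraNneq xr => <-.
Qed.

Lemma LKn_edge_through (x : 'I_n) : 1 < n -> exists r : E, x \in val r.
Proof.
move=> n_gt1; have : 0 < #|[set~ x]| by rewrite cardsC1 card_ord; lia.
case/card_gt0P => y; rewrite !inE => yx.
by exists (Sub _ (@is_edge_set2 _ (@Kn_adj n) _ _ yx)); rewrite SubK !inE eqxx orbT.
Qed.

Lemma LKn_degree (r : E) : 2 * (n - 2) <= #|[set w | LKn_adj r w]|.
Proof.
have [a [b [ab Er]]] := edgeP r.
have end_r (s : bool) : (if s then a else b) \in val r.
  by rewrite Er; case: s; rewrite !inE eqxx ?orbT.
have end_neq s z : z \notin val r -> (if s then a else b) != z.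
  by move=> zr; apply: contraNneq zr => <-.
pose f (sz : bool * 'I_n) := kedge r (if sz.1 then a else b) sz.2.
have -> : 2 * (n - 2) = #|f @: setX [set: bool] (~: val r)|.
  rewrite card_in_imset ?cardsX ?cardsT ?card_bool ?card_Kn_edgeC //.
  move=> [s z] [s' z']; rewrite !inE /= => zr z'r /(congr1 val).
  rewrite /f /= !val_kedge ?end_neq //.
  case/(set2_inside_outside (end_r s) (end_r s') zr z'r) => ends_eq <-.
  by case: s s' ends_eq => [] [] // eq_ab; move: ab; rewrite /Kn_adj eq_ab eqxx.
apply: subset_leq_card; apply/subsetP => _ /imsetP [[s z] szD ->].
by move: szD; rewrite !inE /= => zr; rewrite LKn_adj_kedge.
Qed.

Variable k : nat.

Lemma vertex_caught_card (c : 'I_k -> E) (r : E) :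
  [forall w, LKn_adj r w ==> [exists i, c i == w]] -> 2 * (n - 2) <= k.
Proof.
move=> /forallP caught; apply: leq_trans (LKn_degree r) _.
apply: leq_trans (subset_leq_card (_ : _ \subset c @: [set: 'I_k])) _.
  apply/subsetP => w; rewrite inE => /(implyP (caught w)) /existsP [i /eqP <-].
  exact: imset_f (in_setT i).
by apply: leq_trans (leq_imset_card _ _) _; rewrite cardsT card_ord.
Qed.

Definition robber_safe th (c : 'I_k -> L) (r : E) := exists2 p, p \in val r & load c p <= th.

Lemma load_caught (c c' : 'I_k -> L) (r : E) (p : 'I_n) :
  (forall i, edge_cm (c i) (c' i)) -> p \in val r -> edge_caught c' r -> n - 2 <= load c p.
Proof.
move=> step pr /forallP caught; rewrite -(card_Kn_edgeC r).
apply: (load_threat step pr) => z; rewrite inE => zr; split=> //.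
have rz := LKn_adj_kedge pr zr.
have /existsP [i /eqP ci] := implyP (caught (Sub _ (is_edge_set2 rz))) (setU11 _ _).
exists i, (kedge r p z); first by rewrite ci.
by rewrite val_kedge //; apply: contraNneq zr => <-.
Qed.

Lemma safe_not_caught th (c c' : 'I_k -> L) (r : E) :
  th < n - 2 -> robber_safe th c r -> (forall i, edge_cm (c i) (c' i)) -> ~~ edge_caught c' r.
Proof. move=> th_lt [p pr pc] step; apply/negP => /(load_caught step pr); lia. Qed.

Lemma exists_safe th (c : 'I_k -> L) : 1 < n -> 3 * k < n * th.+1 -> exists r, robber_safe th c r.
Proof.
move=> n_gt1; rewrite -{1}(card_ord n) => /(exists_low_load c) [x cx].
by have [r xr] := LKn_edge_through x n_gt1; exists r; exists x.
Qed.

Lemma redge_escape th (c c' : 'I_k -> L) (r : E) (p : 'I_n) :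
  (forall i, edge_cm (c i) (c' i)) -> p \in val r -> load c p <= th ->
  3 * k < (n - th) * th.+1 -> (forall y, y \in val r -> th < load c' y) ->
  exists z, [/\ z \notin val r, load c' z <= th &
                ~~ [exists i, val (c' i) == [set r; kedge r p z]]].
Proof.
move=> step pr pc k_lt heavy_r.
set B := [set z | (z \notin val r) && [exists i, val (c' i) == [set r; kedge r p z]]].
have cardB : #|B| <= th.
  apply: leq_trans pc; apply: (load_threat step pr) => z.
  rewrite inE => /andP [zr /existsP [i /eqP ci]]; split=> //.
  by exists i, (kedge r p z); rewrite // val_kedge //; apply: contraNneq zr => <-.
set H := [set x | th < load c' x].
have rH : val r \subset H by apply/subsetP => y /heavy_r; rewrite inE.
have cardH : #|H| < n - th.
  by rewrite -(ltn_pmul2r (ltn0Sn th)); apply: leq_ltn_trans (card_high_load c' th) k_lt.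
have /subsetPn [z] : ~~ (~: val r \subset (H :\: val r) :|: B).
  apply/negP => /subset_leq_card; rewrite card_Kn_edgeC cardsU cardsD (setIidPr rH).
  by move: (subset_leq_card rH); rewrite card_Kn_edge; lia.
rewrite !inE negb_or => zr /andP [zH zB]; exists z; split=> //.
  by rewrite leqNgt; move: zH; rewrite zr.
by move: zB; rewrite zr.
Qed.

End CompleteLineGraph.

Lemma edge_win_lower n k : 3 <= n -> 3 * k < n * (n - 2) -> ~ edge_win (@LKn_adj n) k.
Proof.
move=> n_ge3 k_lt; have k_lt' : 3 * k < n * (n - 3).+1 by rewrite -subSn ?subSS.
apply: (@robber_wins _ _ _ _ _ _ (@robber_safe n k (n - 3))) => [|c r c' safe step|c].
- exact: edge_cm_refl.
- split; first by apply: safe_not_caught safe step; lia.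
  move: k_lt'; rewrite -{1}(card_ord n) => /(exists_low_load c') [x cx].
  by have [r' rr' xr'] := LKn_step_to r x; exists r' => //; exists x.
- by apply: exists_safe k_lt'; lia.
Qed.

Lemma redge_win_lower n k th : 1 < n -> th < n - 2 -> 3 * k < (n - th) * th.+1 ->
  ~ redge_win (@LKn_adj n) k.
Proof.
move=> n_gt1 th_lt k_lt.
apply: (@robber_wins _ _ _ _ _ _ (@robber_safe n k th)) => [|c r c' [p pr pc] step|c].
- exact: edge_cm_refl.
- split; first by apply: (safe_not_caught th_lt _ step); exists p.
  have [/exists_inP [y yr cy] | /exists_inPn heavy_r] := boolP [exists y in val r, load c' y <= th].
    by exists r; rewrite ?eqxx //; exists y.
  have [|z [zr cz free]] := redge_escape step pr pc k_lt.
    by move=> y /heavy_r; rewrite -ltnNge.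
  exists (kedge r p z); first by rewrite LKn_adj_kedge // free orbT.
  by exists z; rewrite // val_kedge ?inE ?eqxx ?orbT //; apply: contraNneq zr => <-.
- by apply: exists_safe => //; apply: leq_trans k_lt _; rewrite leq_mul2r leq_subr orbT.
Qed.

Lemma vertex_win_lower n k : k < 2 * (n - 2) -> ~ vertex_win (@LKn_adj n) k.
Proof.
move=> k_lt; have n_gt1 : 1 < n by lia.
apply: (@robber_wins _ _ _ _ _ _ (fun _ _ => True)) => [e|c r c' _ _|c].
- by rewrite eqxx.
- split; last by exists r; rewrite ?eqxx.
  by apply/negP => /vertex_caught_card; lia.
- have [r _] := LKn_edge_through (Ordinal (ltnW n_gt1)) n_gt1; by exists r.
Qed.

Lemma vertex_win_one_round (V J : finType) (adj : rel V) (k : nat)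
    (pos : J -> V) (reply : V -> J -> V) :
  (forall r j, (pos j == reply r j) || adj (pos j) (reply r j)) ->
  (forall r w, adj r w -> exists j, reply r j = w) -> 0 < #|J| <= k -> vertex_win adj k.
Proof.
move=> legal onto /andP [/card_gt0P [j0 _] Jk].
pose idx (i : 'I_k) := nth j0 (enum J) i.
exists (fun i => pos (idx i)) => r.
apply: (@cwin_step _ _ _ _ _ _ _ _ (fun i => reply r (idx i))) => [i|]; first exact: legal.
left; apply/forallP => w; apply/implyP => /onto [j <-].
have jk : index j (enum J) < k by apply: leq_trans Jk; rewrite cardE index_mem mem_enum.
by apply/existsP; exists (Ordinal jk); rewrite /idx nth_index ?mem_enum.
Qed.

Section VertexStrategy.

Variable m : nat.
Local Notation n := m.+3.
Local Notation E := (LKn n).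

(* The corners are the least and the largest vertex: an edge whose smaller
   (resp. larger) endpoint is a middle vertex then avoids [corner false]
   (resp. [corner true]), see [endpoint_mid]. *)
Definition corner (s : bool) : 'I_n := if s then ord_max else ord0.
Definition mid (x : 'I_m.+1) : 'I_n := Ordinal (leqW (ltn_ord x) : x.+1 < n).

Lemma vertex_cases (v : 'I_n) : (exists s, v = corner s) \/ (exists x, v = mid x).
Proof.
case: v => [[|v] Hv]; first by left; exists false; apply: val_inj.
have [vm | vm] := ltnP v m.+1; last by left; exists true; apply: val_inj => /=; lia.
by right; exists (Ordinal vm); apply: val_inj.
Qed.

Lemma mid_neq_corner (x : 'I_m.+1) (s : bool) : mid x != corner s.
Proof. by rewrite -val_eqE; case: s => /=; have := ltn_ord x; lia. Qed.

Definition corner_edge : E := Sub _ (@is_edge_set2 _ (@Kn_adj n) (corner false) (corner true) isT).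

Lemma val_corner_edge (s : bool) : val corner_edge = [set corner s; corner (~~ s)].
Proof. by case: s; rewrite // setUC. Qed.

Definition pos (j : bool * 'I_m.+1) : E := kedge corner_edge (corner j.1) (mid j.2).

Lemma val_pos (j : bool * 'I_m.+1) : val (pos j) = [set corner j.1; mid j.2].
Proof. by rewrite val_kedge // eq_sym mid_neq_corner. Qed.

Definition ends (r : E) : 'I_n * 'I_n :=
  odflt (ord0, ord0) [pick ab : 'I_n * 'I_n | (ab.1 < ab.2) && (val r == [set ab.1; ab.2])].

Lemma endsP (r : E) : (ends r).1 < (ends r).2 /\ val r = [set (ends r).1; (ends r).2].
Proof.
rewrite /ends; case: pickP => [[a b] /andP [ab /eqP] //|none].
have [a [b [ab Er]]] := edgeP r.
have [a_lt_b | b_lt_a | a_eq_b] := ltngtP a b.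
- by move: (none (a, b)); rewrite /= a_lt_b Er eqxx.
- by move: (none (b, a)); rewrite /= b_lt_a Er setUC eqxx.
- by move: ab; rewrite /Kn_adj (val_inj a_eq_b) eqxx.
Qed.

Definition endpoint (r : E) (s : bool) : 'I_n := if s then (ends r).2 else (ends r).1.

Lemma endpoint_in (r : E) (s : bool) : endpoint r s \in val r.
Proof. by have [_ ->] := endsP r; case: s; rewrite !inE eqxx ?orbT. Qed.

Lemma endpoint_mid (r : E) (x : 'I_m.+1) : mid x \in val r ->
  exists s, endpoint r s = mid x /\ corner s \notin val r.
Proof.
have [ab Er] := endsP r; rewrite Er !inE => /orP [] /eqP mx.
- exists false; split=> //; rewrite !inE negb_or -!val_eqE /= -mx /=.
  by move: ab; rewrite -mx /=; lia.
- exists true; split=> //; rewrite !inE negb_or -!val_eqE /= -mx /=.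
  by move: ab (ltn_ord x); rewrite -mx /=; lia.
Qed.

Definition reply (r : E) (j : bool * 'I_m.+1) : E :=
  if pos j == r then corner_edge
  else if (corner j.1 \in val r) || (mid j.2 \in val r) then pos j
  else kedge corner_edge (endpoint r j.1) (mid j.2).

Lemma reply_self (r : E) j : pos j = r -> reply r j = corner_edge.
Proof. by rewrite /reply => ->; rewrite eqxx. Qed.

Lemma reply_meets (r : E) j : (corner j.1 \in val r) (+) (mid j.2 \in val r) -> reply r j = pos j.
Proof.
move=> one_in; have pos_r : pos j != r.
  by apply: contraTneq one_in => <-; rewrite val_pos !inE !eqxx orbT.
by rewrite /reply (negbTE pos_r); move: one_in; case: (_ \in _); case: (_ \in _).
Qed.

Lemma reply_disjoint (r : E) j : corner j.1 \notin val r -> mid j.2 \notin val r ->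
  val (reply r j) = [set endpoint r j.1; mid j.2].
Proof.
move=> cr xr; have pos_r : pos j != r.
  by apply: contraNneq cr => <-; rewrite val_pos !inE eqxx.
rewrite /reply (negbTE pos_r) (negbTE cr) (negbTE xr) val_kedge //.
by apply: contraNneq xr => <-; apply: endpoint_in.
Qed.

Lemma reply_legal (r : E) j : (pos j == reply r j) || LKn_adj (pos j) (reply r j).
Proof.
have pos_corner : corner j.1 \in val (pos j) by rewrite val_pos !inE eqxx.
have pos_mid : mid j.2 \in val (pos j) by rewrite val_pos !inE eqxx orbT.
rewrite /reply; case: (eqVneq (pos j) r) => [_ | _].
  by apply: (line_adj_or_eq pos_corner); rewrite (val_corner_edge j.1) !inE eqxx.
case: ifP => [_ | /norP [_ xr]]; first by rewrite eqxx.
apply: (line_adj_or_eq pos_mid); rewrite val_kedge ?inE ?eqxx ?orbT //.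
by apply: contraNneq xr => <-; apply: endpoint_in.
Qed.

Lemma reply_onto (r w : E) : LKn_adj r w -> exists j, reply r j = w.
Proof.
case/LKn_adjP => p [y [pr yr Ew]].
suff [j Ej] : exists j, val (reply r j) = val w by exists j; apply: val_inj.
rewrite {w}Ew.
have [[t Ey] | [x Ey]] := vertex_cases y; subst y.
- have [[t' Ep] | [x Ep]] := vertex_cases p; subst p; last first.
    exists (t, x); rewrite reply_meets ?val_pos; first by rewrite setUC.
    by rewrite [_.1]/= [_.2]/= pr (negbTE yr).
  have tt' : t' = ~~ t by case: t t' pr yr => [] [] // ->.
  have [q qp Er] := Kn_edge_other pr.
  have [[t'' Eq] | [x Eq]] := vertex_cases q; subst q.
    by move: qp yr; rewrite Er tt' !inE => {Er pr tt'}; case: t t'' => [] []; rewrite ?eqxx ?orbT.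
  exists (~~ t, x); rewrite reply_self; last by apply: val_inj; rewrite val_pos Er tt'.
  by rewrite (val_corner_edge (~~ t)) negbK tt'.
- have [[t Ep] | [x' Ep]] := vertex_cases p; subst p.
    exists (t, x); rewrite reply_meets ?val_pos //.
    by rewrite [_.1]/= [_.2]/= pr (negbTE yr).
  have [s [ps cs]] := endpoint_mid pr.
  by exists (s, x); rewrite reply_disjoint ?ps.
Qed.
End VertexStrategy.

Lemma vertex_win_upper m : vertex_win (@LKn_adj m.+3) (2 * m.+1).
Proof.
apply: (vertex_win_one_round (@reply_legal m) (@reply_onto m)).
by rewrite card_prod card_bool card_ord leqnn andbT muln_gt0.
Qed.
Lemma half_threshold n k : 3 <= n -> 12 * k < n ^ 2 ->
  (n - 2)./2 < n - 2 /\ 3 * k < (n - (n - 2)./2) * ((n - 2)./2).+1.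
Proof.
move=> n_ge3 k_lt; have := odd_double_half (n - 2); rewrite -muln2.
by case: (odd (n - 2)) => /= E; split; nia.
Qed.

Theorem lemma4 (n : nat) : 3 <= n ->
  [/\ (vertex_win (@LKn_adj n) (2 * (n - 2)) /\
       forall k, k < 2 * (n - 2) -> ~ vertex_win (@LKn_adj n) k),
      (forall k, edge_win (@LKn_adj n) k -> n * (n - 2) <= 3 * k)
    & (forall k, redge_win (@LKn_adj n) k -> n ^ 2 <= 12 * k)].
Proof.
move=> n_ge3; split.
- split; last by move=> k; apply: vertex_win_lower.
  by case: n n_ge3 => [|[|[|m]]] // _; apply: vertex_win_upper.
- move=> k win; rewrite leqNgt; apply/negP => k_lt.
  exact: edge_win_lower n_ge3 k_lt win.
- move=> k win; rewrite leqNgt; apply/negP => k_lt.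
  have [th_lt k_lt'] := half_threshold n_ge3 k_lt.
  exact: redge_win_lower (ltnW n_ge3) th_lt k_lt' win.
Qed.
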